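(* Let $\Gamma$ be a group and let $S$ be a $\Gamma$-graded semigroup with local units. Then there is an isomorphism of categories $\mathcal{F}_{\#}:\mathrm{Gr}\text{-}S\to \mathrm{Mod}\text{-}(S\#\Gamma)$ such that $\mathcal{T}_\alpha\circ\mathcal{F}_{\#}=\mathcal{F}_{\#}\circ\mathcal{T}_\alpha$ for every $\alpha\in\Gamma$, where on the left $\mathcal{T}_\alpha$ denotes the shift functor on $\mathrm{Mod}\text{-}(S\#\Gamma)$ and on the right the shift functor on $\mathrm{Gr}\text{-}S$.
   Context: All semigroups have a zero element $0$. $\varepsilon$ is the identity of $\Gamma$. A semigroup $S$ is $\Gamma$-graded if there is a map $\deg:S\setminus\{0\}\to\Gamma$ with $\deg(st)=\deg(s)\deg(t)$ whenever $st\neq 0$; put $S_\alpha=\deg^{-1}(\alpha)\cup\{0\}$. $S$ has local units if for each $s\in S$ there are idempotents $u,v$ with $us=s=sv$. A (pointed) left $S$-set is a set $X$ with an action $S\times X\to X$, $s(tx)=(st)x$, and a distinguished element $0_X$ with $0x=0_X$ for all $x$; it is unital if $SX=X$. An $S$-map is a function $\phi$ with $\phi(sx)=s\phi(x)$. A left $S$-set $X$ is $\Gamma$-graded if there is a map $\deg:X\setminus\{0_X\}\to\Gamma$ with $\deg(sx)=\deg(s)\deg(x)$ whenever $sx\neq 0_X$; $X_\alpha=\deg^{-1}(\alpha)\cup\{0_X\}$. $\mathrm{Mod}\text{-}T$ is the category of unital pointed left $T$-sets with $T$-maps; $\mathrm{Gr}\text{-}S$ is the category of $\Gamma$-graded unital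 pointed left $S$-sets with graded $S$-maps (those with $\phi(X_\alpha)\subseteq Y_\alpha$ for all $\alpha$). The shift functor $\mathcal{T}_\alpha$ on $\mathrm{Gr}\text{-}S$ sends $X$ to $X(\alpha)$, which is $X$ with grading $X(\alpha)_\beta=X_{\beta\alpha}$, and is the identity on morphisms. The smash product $S\#\Gamma=\{sP_\alpha : s\in S\setminus\{0\},\alpha\in\Gamma\}\cup\{0\}$ has multiplication $(sP_\alpha)(tP_\beta)=stP_\beta$ if $st\neq0$ and $t\in S_{\alpha\beta^{-1}}$, and $0$ otherwise (with $0$ absorbing). The shift functor $\mathcal{T}_\alpha$ on $\mathrm{Mod}\text{-}(S\#\Gamma)$ sends $X$ to $X(\alpha)$, which is the set $X$ with new action $(sP_\beta).x=(sP_{\beta\alpha})x$, and is the identity on morphisms. *)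

From Stdlib Require Import ClassicalDescription ProofIrrelevance.
Set Implicit Arguments.
Unset Strict Implicit.

Record Group := {
  gcar :> Type;
  gmul : gcar -> gcar -> gcar;
  gone : gcar;
  ginv : gcar -> gcar;
  gmulA : forall a b c, gmul a (gmul b c) = gmul (gmul a b) c;
  gmul1g : forall a, gmul gone a = a;
  gmulg1 : forall a, gmul a gone = a;
  gmulVg : forall a, gmul (ginv a) a = gone;
  gmulgV : forall a, gmul a (ginv a) = gone }.
Arguments gmul {g}. Arguments ginv {g}. Arguments gone {g}.

Lemma ginvM (G : Group) (a b : G) : ginv (gmul a b) = gmul (ginv b) (ginv a).
Proof.
  assert (H : gmul (gmul a b) (gmul (ginv b) (ginv a)) = gone).
  { rewrite <- gmulA, (gmulA b (ginv b)), gmulgV, gmul1g, gmulgV; reflexivity. }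
  transitivity (gmul (ginv (gmul a b)) (gmul (gmul a b) (gmul (ginv b) (ginv a)))).
  - rewrite H, gmulg1; reflexivity.
  - rewrite gmulA, gmulVg, gmul1g; reflexivity.
Qed.

Lemma gshift_cancel (G : Group) (b c a : G) :
  gmul (gmul b a) (ginv (gmul c a)) = gmul b (ginv c).
Proof.
  rewrite ginvM, <- gmulA, (gmulA a), gmulgV, gmul1g; reflexivity.
Qed.

(* A "magma with zero": carrier, multiplication and a distinguished zero.
   The semigroup axioms are imposed separately by [is_semigroup0]. *)
Record Magma0 := { mcar :> Type; mmul : mcar -> mcar -> mcar; mzero : mcar }.
Arguments mmul {m}. Arguments mzero : clear implicits.

Definition is_semigroup0 (S : Magma0) : Prop :=
  (forall a b c : S, mmul a (mmul b c) = mmul (mmul a b) c) /\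
  (forall a : S, mmul (mzero S) a = mzero S) /\
  (forall a : S, mmul a (mzero S) = mzero S).

(* S is Gamma-graded by deg (the value of deg at 0 is irrelevant) *)
Definition is_graded (G : Group) (S : Magma0) (deg : S -> G) : Prop :=
  forall s t : S, mmul s t <> mzero S -> deg (mmul s t) = gmul (deg s) (deg t).

Definition in_grade (G : Group) (S : Magma0) (deg : S -> G) (a : G) (t : S) : Prop :=
  t = mzero S \/ deg t = a.

Definition has_local_units (S : Magma0) : Prop :=
  forall s : S, exists u v : S,
    mmul u u = u /\ mmul v v = v /\ mmul u s = s /\ mmul s v = s.

Record LSet (T : Magma0) := {
  lcar :> Type;
  lact : T -> lcar -> lcar;
  lpt : lcar;
  lact_assoc : forall (s t : T) (x : lcar), lact s (lact t x) = lact (mmul s t) x;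
  lact_zero : forall x : lcar, lact (mzero T) x = lpt;
  lunital : forall x : lcar, exists (s : T) (y : lcar), x = lact s y }.
Arguments lact {T} l. Arguments lpt {T} l.

Definition is_Tmap (T : Magma0) (X Y : LSet T) (f : X -> Y) : Prop :=
  forall (s : T) (x : X), f (lact X s x) = lact Y s (f x).

Record Cat := {
  Ob : Type;
  Hom : Ob -> Ob -> Type;
  idm : forall X, Hom X X;
  cmp : forall X Y Z, Hom Y Z -> Hom X Y -> Hom X Z }.
Arguments Hom : clear implicits. Arguments idm {c} X. Arguments cmp {c X Y Z}.

Record Functor (C D : Cat) := {
  fobj : Ob C -> Ob D;
  fmap : forall X Y, Hom C X Y -> Hom D (fobj X) (fobj Y);
  fmap_id : forall X, fmap (idm X) = idm (fobj X);
  fmap_cmp : forall X Y Z (g : Hom C Y Z) (f : Hom C X Y),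
      fmap (cmp g f) = cmp (fmap g) (fmap f) }.
Arguments fobj {C D} _ _. Arguments fmap {C D} _ {X Y} _.

Definition Fid (C : Cat) : Functor C C.
Proof.
  refine {| fobj := fun X => X; fmap := fun X Y f => f |}; reflexivity.
Defined.

Definition Fcomp (C D E : Cat) (G : Functor D E) (F : Functor C D) : Functor C E.
Proof.
  refine {| fobj := fun X => fobj G (fobj F X);
            fmap := fun X Y f => fmap G (fmap F f) |}.
  - intro X; rewrite fmap_id, fmap_id; reflexivity.
  - intros; rewrite fmap_cmp, fmap_cmp; reflexivity.
Defined.

Definition is_iso_of_cats (C D : Cat) (F : Functor C D) : Prop :=
  exists G : Functor D C, Fcomp G F = Fid C /\ Fcomp F G = Fid D.

Lemma sig_eq (A : Type) (P : A -> Prop) (x y : sig P) :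
  proj1_sig x = proj1_sig y -> x = y.
Proof.
  destruct x as [x Hx], y as [y Hy]; simpl; intros ->.
  f_equal; apply proof_irrelevance.
Qed.

Definition ModCat (T : Magma0) : Cat.
Proof.
  refine {| Ob := LSet T;
            Hom := fun X Y => {f : X -> Y | is_Tmap f};
            idm := fun X => exist _ (fun x => x) _;
            cmp := fun X Y Z g f =>
                     exist _ (fun x => proj1_sig g (proj1_sig f x)) _ |}.
  - intros s x; reflexivity.
  - intros s x; rewrite (proj2_sig f), (proj2_sig g); reflexivity.
Defined.

Section Graded.
Variables (G : Group) (S : Magma0) (deg : S -> G).

Record GrSet := {
  gset :> LSet S;
  gdeg : gset -> option G;
  gdeg_pt : forall x, gdeg x = None <-> x = lpt gset;
  gdeg_act : forall (s : S) (x : gset) (b : G), lact gset s x <> lpt gset ->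
      gdeg x = Some b -> gdeg (lact gset s x) = Some (gmul (deg s) b) }.
Arguments gdeg : clear implicits.

Definition gpart (X : GrSet) (a : G) (x : X) : Prop :=
  x = lpt X \/ gdeg X x = Some a.
Arguments gpart : clear implicits.

Definition is_graded_map (X Y : GrSet) (f : X -> Y) : Prop :=
  forall (a : G) (x : X), gpart X a x -> gpart Y a (f x).

Definition GrCat : Cat.
Proof.
  refine {| Ob := GrSet;
            Hom := fun X Y => {f : X -> Y | is_Tmap f /\ is_graded_map f};
            idm := fun X => exist _ (fun x => x) _;
            cmp := fun X Y Z g f =>
                     exist _ (fun x => proj1_sig g (proj1_sig f x)) _ |}.
  - split; intros ? ?; auto.
  - destruct f as [f [f1 f2]], g as [g [g1 g2]]; simpl; split.
    + intros s x; rewrite f1, g1; reflexivity.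
    + intros a x Hx; auto.
Defined.

(* shift X(alpha): X(alpha)_b = X_{b alpha}, i.e. new degree = deg * alpha^-1 *)
Definition shift_gr (a : G) (X : GrSet) : GrSet.
Proof.
  refine {| gset := gset X;
            gdeg := fun x => option_map (fun g => gmul g (ginv a)) (gdeg X x) |}.
  - intro x; rewrite <- gdeg_pt; destruct (gdeg X x); simpl; split;
      congruence.
  - intros s x b Hne Hx.
    destruct (gdeg X x) as [c|] eqn:E; simpl in Hx; [|discriminate].
    injection Hx as <-.
    rewrite (gdeg_act Hne E); simpl; rewrite gmulA; reflexivity.
Defined.

Lemma shift_gr_map (a : G) (X Y : GrSet) (f : X -> Y) :
  is_Tmap f /\ is_graded_map f ->
  @is_Tmap S (shift_gr a X) (shift_gr a Y) f /\
  @is_graded_map (shift_gr a X) (shift_gr a Y) f.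
Proof.
  intros [H1 H2]; split; [exact H1|].
  intros b x Hx; unfold gpart in *; simpl in *.
  assert (Hx' : gpart X (gmul b a) x).
  { destruct Hx as [Hx|Hx]; [left; exact Hx|right].
    destruct (gdeg X x) as [c|] eqn:E; simpl in Hx; [|discriminate].
    injection Hx as <-. rewrite <- gmulA, gmulVg, gmulg1; reflexivity. }
  destruct (H2 _ _ Hx') as [H|H]; [left; exact H|right].
  rewrite H; simpl; rewrite <- gmulA, gmulgV, gmulg1; reflexivity.
Qed.

Definition ShiftGr (a : G) : Functor GrCat GrCat.
Proof.
  refine {| fobj := (shift_gr a : Ob GrCat -> Ob GrCat);
            fmap := fun X Y f => exist _ (proj1_sig f) (shift_gr_map a (proj2_sig f)) |};
  intros; apply sig_eq; reflexivity.
Defined.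

(* Some (s, a) (with s <> 0) stands for s P_a; None is the zero *)
Definition smash_car : Type := option {p : S * G | fst p <> mzero S}.

Definition smash_mul (x y : smash_car) : smash_car :=
  match x, y with
  | Some p, Some q =>
      match excluded_middle_informative
              (mmul (fst (proj1_sig p)) (fst (proj1_sig q)) <> mzero S /\
               in_grade deg (gmul (snd (proj1_sig p)) (ginv (snd (proj1_sig q))))
                        (fst (proj1_sig q))) with
      | left H => Some (exist (fun r : S * G => fst r <> mzero S)
                          (mmul (fst (proj1_sig p)) (fst (proj1_sig q)),
                           snd (proj1_sig q)) (proj1 H))
      | right _ => None
      end
  | _, _ => None
  end.

Definition Smash : Magma0 := {| mcar := smash_car; mmul := smash_mul; mzero := None |}.

Definition shift_el (a : G) (x : smash_car) : smash_car :=
  match x with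
  | Some (exist _ q Hq) =>
      Some (exist (fun r : S * G => fst r <> mzero S) (fst q, gmul (snd q) a) Hq)
  | None => None
  end.

Lemma shift_el_mul (a : G) (x y : smash_car) :
  shift_el a (smash_mul x y) = smash_mul (shift_el a x) (shift_el a y).
Proof.
  destruct x as [[[s b] Hs]|], y as [[[t c] Ht]|]; try reflexivity.
  unfold smash_mul; simpl.
  rewrite gshift_cancel.
  destruct (excluded_middle_informative _); simpl; [|reflexivity].
  f_equal; apply sig_eq; reflexivity.
Qed.

Lemma shift_el_inv (a : G) (x : smash_car) :
  shift_el a (shift_el (ginv a) x) = x.
Proof.
  destruct x as [[[s b] Hs]|]; simpl; [|reflexivity].
  f_equal; apply sig_eq; simpl.
  rewrite <- gmulA, gmulVg, gmulg1; reflexivity.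
Qed.

Definition shift_mod (a : G) (X : LSet Smash) : LSet Smash.
Proof.
  refine {| lcar := lcar X;
            lact := fun (u : Smash) x => lact X (shift_el a u) x;
            lpt := lpt X |}.
  - intros s t x; rewrite lact_assoc; simpl; rewrite shift_el_mul; reflexivity.
  - intro x; apply (@lact_zero _ X).
  - intro x; destruct (@lunital _ X x) as [s [y ->]].
    exists (shift_el (ginv a) s), y; rewrite shift_el_inv; reflexivity.
Defined.

Definition ShiftMod (a : G) : Functor (ModCat Smash) (ModCat Smash).
Proof.
  refine {| fobj := (shift_mod a : Ob (ModCat Smash) -> Ob (ModCat Smash));
            fmap := fun X Y f =>
              exist (fun g : shift_mod a X -> shift_mod a Y => is_Tmap g)
                    (proj1_sig f) (fun s x => proj2_sig f (shift_el a s) x) |};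
  intros; apply sig_eq; reflexivity.
Defined.

End Graded.

From Stdlib Require Import ClassicalDescription ProofIrrelevance
  FunctionalExtensionality.
Set Implicit Arguments.
Unset Strict Implicit.

(* F_# keeps the pointed set of a graded S-set X and lets s P_b act as s on
   X_b and as 0 elsewhere.  Conversely, in an S#G-module Y the product
   (u P_c)(s P_a) vanishes unless c = deg(s) a, so every nonzero y = (s P_a) w
   has the unique degree deg(s) a, witnessed by u P_(deg(s) a) fixing y for a
   local unit u of s; S then acts by s y = (s P_(deg y)) y.  The two
   constructions are mutually inverse and do not touch morphisms; they commute
   with the shifts because s P_(b a) acts on X exactly as s P_b acts on X(a). *)

Lemma gmul_eq_mulV (G : Group) (x b a : G) : gmul x b = a <-> x = gmul a (ginv b).
Proof.
  split; intro H; subst.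
  - rewrite <- gmulA, gmulgV, gmulg1; reflexivity.
  - rewrite <- gmulA, gmulVg, gmulg1; reflexivity.
Qed.

Lemma if_emi_true (P : Prop) (A : Type) (a b : A) :
  P -> (if excluded_middle_informative P then a else b) = a.
Proof. intro H; destruct (excluded_middle_informative P); easy. Qed.

Lemma if_emi_false (P : Prop) (A : Type) (a b : A) :
  ~ P -> (if excluded_middle_informative P then a else b) = b.
Proof. intro H; destruct (excluded_middle_informative P); easy. Qed.

Lemma functor_eq_concrete (C D : Cat) (car : Ob D -> Type)
  (hf : forall X Y, Hom D X Y -> car X -> car Y)
  (hf_inj : forall X Y (f g : Hom D X Y), hf X Y f = hf X Y g -> f = g)
  (F1 F2 : Functor C D) (e : forall X, fobj F1 X = fobj F2 X)
  (hc : forall X, car (fobj F1 X) = car (fobj F2 X))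
  (H : forall X Y (f : Hom C X Y) (x : car (fobj F1 X)),
     hf _ _ (fmap F2 f) (eq_rect _ (fun T => T) x _ (hc X)) =
     eq_rect _ (fun T => T) (hf _ _ (fmap F1 f) x) _ (hc Y)) : F1 = F2.
Proof.
  destruct F1 as [o1 m1 i1 c1], F2 as [o2 m2 i2 c2]; simpl in *.
  assert (o1 = o2) by (apply functional_extensionality; exact e). subst o2.
  assert (m1 = m2).
  { apply functional_extensionality_dep; intro X.
    apply functional_extensionality_dep; intro Y.
    apply functional_extensionality_dep; intro f.
    apply hf_inj, functional_extensionality; intro x.
    specialize (H X Y f x).
    rewrite (proof_irrelevance _ (hc X) eq_refl),
            (proof_irrelevance _ (hc Y) eq_refl) in H.
    symmetry; exact H. }
  subst m2.
  rewrite (proof_irrelevance _ i1 i2), (proof_irrelevance _ c1 c2); reflexivity.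
Qed.

Lemma Build_LSet_eq (T : Magma0) (A : Type) (act1 act2 : T -> A -> A) (pt : A)
  a1 z1 u1 a2 z2 u2 :
  act1 = act2 -> @Build_LSet T A act1 pt a1 z1 u1 = @Build_LSet T A act2 pt a2 z2 u2.
Proof.
  intros <-.
  rewrite (proof_irrelevance _ a1 a2), (proof_irrelevance _ z1 z2),
          (proof_irrelevance _ u1 u2); reflexivity.
Qed.

Lemma Build_GrSet_eq (G : Group) (S : Magma0) (deg : S -> G) (A : Type)
  (act1 act2 : S -> A -> A) (pt : A) a1 z1 u1 a2 z2 u2 d1 d2 p1 q1 p2 q2 :
  act1 = act2 -> d1 = d2 ->
  @Build_GrSet G S deg (@Build_LSet S A act1 pt a1 z1 u1) d1 p1 q1 =
  @Build_GrSet G S deg (@Build_LSet S A act2 pt a2 z2 u2) d2 p2 q2.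
Proof.
  intros <- <-.
  destruct (proof_irrelevance _ a1 a2), (proof_irrelevance _ z1 z2),
           (proof_irrelevance _ u1 u2).
  rewrite (proof_irrelevance _ p1 p2), (proof_irrelevance _ q1 q2); reflexivity.
Qed.

Section PointedSets.
Variables (T : Magma0) (X : LSet T).

Lemma lact_pt (mul0r : forall s : T, mmul s (mzero T) = mzero T) (s : T) :
  lact X s (lpt X) = lpt X.
Proof.
  rewrite <- (lact_zero (l:=X) (lpt X)) at 1.
  rewrite lact_assoc, mul0r; apply lact_zero.
Qed.

Lemma lact_left_unit (left_units : forall s : T, exists u, mmul u s = s) (x : X) :
  exists u, lact X u x = x.
Proof.
  destruct (lunital (l:=X) x) as [s [y ->]], (left_units s) as [u Hu].
  exists u; rewrite lact_assoc, Hu; reflexivity.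
Qed.

Lemma Tmap_pt (Y : LSet T) (f : X -> Y) : is_Tmap f -> f (lpt X) = lpt Y.
Proof.
  intro Hf; rewrite <- (lact_zero (l:=X) (lpt X)), Hf; apply lact_zero.
Qed.

End PointedSets.

Section SmashCorrespondence.
Variables (G : Group) (S : Magma0) (deg : S -> G).
Hypothesis mul0s : forall s : S, mmul (mzero S) s = mzero S.
Hypothesis muls0 : forall s : S, mmul s (mzero S) = mzero S.
Hypothesis left_units : forall s : S, exists u, mmul u s = s.

(* The paper's [s P_b], read as [0] when [s = 0]; every element of [S # G] has
   this form, so proofs of [s <> 0] need not be carried around. *)
Definition smash_of (s : S) (b : G) : Smash deg :=
  match excluded_middle_informative (s = mzero S) with
  | left _ => None
  | right Hs => Some (exist (fun r : S * G => fst r <> mzero S) (s, b) Hs)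
  end.

Lemma smash_of_zero (b : G) : smash_of (mzero S) b = None.
Proof.
  unfold smash_of; destruct (excluded_middle_informative _); congruence.
Qed.

Lemma smash_of_nz (s : S) (b : G) (Hs : s <> mzero S) :
  smash_of s b = Some (exist (fun r : S * G => fst r <> mzero S) (s, b) Hs).
Proof.
  unfold smash_of; destruct (excluded_middle_informative _); [contradiction|].
  f_equal; apply sig_eq; reflexivity.
Qed.

Lemma smash_of_surj (u : Smash deg) : exists s b, u = smash_of s b.
Proof.
  destruct u as [[[s b] Hs]|].
  - exists s, b; rewrite (smash_of_nz (s:=s) b Hs); reflexivity.
  - exists (mzero S), gone; rewrite smash_of_zero; reflexivity.
Qed.

Lemma smash_mul0r (u : Smash deg) : mmul u (mzero (Smash deg)) = mzero (Smash deg).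
Proof. destruct u; reflexivity. Qed.

Lemma smash_of_mul (s t : S) (a b : G) :
  mmul (smash_of s a) (smash_of t b) =
  if excluded_middle_informative (gmul (deg t) b = a)
  then smash_of (mmul s t) b else None.
Proof.
  destruct (excluded_middle_informative (s = mzero S)) as [->|Hs].
  { rewrite smash_of_zero, mul0s, smash_of_zero.
    destruct (excluded_middle_informative _); reflexivity. }
  destruct (excluded_middle_informative (t = mzero S)) as [->|Ht].
  { rewrite smash_of_zero, muls0, smash_of_zero, smash_mul0r.
    destruct (excluded_middle_informative _); reflexivity. }
  rewrite (smash_of_nz a Hs), (smash_of_nz b Ht); cbn.
  destruct (excluded_middle_informative
             (mmul s t <> mzero S /\ in_grade deg (gmul a (ginv b)) t))
    as [[Hst Hgr]|Hn];
    destruct (excluded_middle_informative (gmul (deg t) b = a)) as [Hd|Hd].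
  - symmetry; apply (smash_of_nz (s:=mmul s t)).
  - destruct Hgr as [Hgr|Hgr]; [contradiction|].
    exfalso; apply Hd, gmul_eq_mulV, Hgr.
  - destruct (excluded_middle_informative (mmul s t = mzero S)) as [Hst|Hst].
    + rewrite Hst, smash_of_zero; reflexivity.
    + exfalso; apply Hn; split; [exact Hst|right; apply gmul_eq_mulV, Hd].
  - reflexivity.
Qed.

Lemma smash_of_mul_deg (s t : S) (b : G) :
  mmul (smash_of s (gmul (deg t) b)) (smash_of t b) = smash_of (mmul s t) b.
Proof. rewrite smash_of_mul, if_emi_true; reflexivity. Qed.

Lemma shift_el_smash_of (a : G) (s : S) (b : G) :
  shift_el a (smash_of s b) = smash_of s (gmul b a).
Proof.
  unfold smash_of; destruct (excluded_middle_informative _); reflexivity.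
Qed.

Section ModToGr.
Variable Y : LSet (Smash deg).

Lemma lact_Y_pt (u : Smash deg) : lact Y u (lpt Y) = lpt Y.
Proof. exact (lact_pt Y smash_mul0r u). Qed.

Lemma lact_Y_decompose (y : Y) :
  y <> lpt Y -> exists s a w, y = lact Y (smash_of s a) w.
Proof.
  intro Hy; destruct (lunital (l:=Y) y) as [u [w ->]].
  destruct (smash_of_surj u) as [s [a ->]]; exists s, a, w; reflexivity.
Qed.

Lemma lact_lact_nz_index (s t : S) (a b : G) (w : Y) :
  lact Y (smash_of t b) (lact Y (smash_of s a) w) <> lpt Y -> gmul (deg s) a = b.
Proof.
  rewrite lact_assoc, smash_of_mul.
  destruct (excluded_middle_informative _) as [Hd|_]; [easy|].
  intro H; exfalso; apply H, (lact_zero (l:=Y)).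
Qed.

Lemma lact_nz_index_unique (y : Y) (s t : S) (a b : G) :
  lact Y (smash_of s a) y <> lpt Y -> lact Y (smash_of t b) y <> lpt Y -> a = b.
Proof.
  intros Ha Hb.
  assert (Hy : y <> lpt Y) by (intros ->; apply Ha, lact_Y_pt).
  destruct (lact_Y_decompose Hy) as [r [c [w ->]]].
  rewrite <- (lact_lact_nz_index Ha), <- (lact_lact_nz_index Hb); reflexivity.
Qed.

(* Membership in the paper's [Y_b = P_b Y]; with local units, [y] is in it as
   soon as some [t P_b] does not kill [y] ([grade_of_lact_nz]). *)
Definition has_grade (y : Y) (b : G) : Prop :=
  y <> lpt Y /\ exists t, lact Y (smash_of t b) y = y.

Lemma has_grade_unique (y : Y) (b c : G) : has_grade y b -> has_grade y c -> b = c.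
Proof.
  intros [Hy [t Ht]] [_ [t' Ht']].
  apply (lact_nz_index_unique (s:=t) (t:=t') (y:=y)); congruence.
Qed.

Lemma has_grade_exists_unique (y : Y) :
  (exists b, has_grade y b) -> exists! b, has_grade y b.
Proof.
  intros [b Hb]; exists b; split; [exact Hb|].
  intros c; apply has_grade_unique, Hb.
Qed.

Definition grade (y : Y) : option G :=
  match excluded_middle_informative (exists b, has_grade y b) with
  | left H =>
      Some (proj1_sig (constructive_definite_description _ (has_grade_exists_unique H)))
  | right _ => None
  end.

Lemma grade_SomeE (y : Y) (b : G) : grade y = Some b <-> has_grade y b.
Proof.
  unfold grade; destruct (excluded_middle_informative _) as [H|H].
  - destruct (constructive_definite_description _ _) as [c Hc]; simpl.
    split; [intros [= <-]; exact Hc|intro Hb; f_equal; exact (has_grade_unique Hc Hb)].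
  - split; [discriminate|intro Hb; exfalso; apply H; exists b; exact Hb].
Qed.

Lemma has_grade_lact (t : S) (b : G) (w : Y) :
  lact Y (smash_of t b) w <> lpt Y ->
  has_grade (lact Y (smash_of t b) w) (gmul (deg t) b).
Proof.
  intro H; split; [exact H|].
  destruct (left_units t) as [u Hu]; exists u.
  rewrite lact_assoc, smash_of_mul_deg, Hu; reflexivity.
Qed.

Lemma grade_NoneE (y : Y) : grade y = None <-> y = lpt Y.
Proof.
  split.
  - intro H; destruct (excluded_middle_informative (y = lpt Y)) as [E|E]; [exact E|].
    destruct (lact_Y_decompose E) as [s [a [w ->]]].
    assert (Hg := proj2 (grade_SomeE _ _) (has_grade_lact E)); congruence.
  - intros ->; destruct (grade (lpt Y)) as [b|] eqn:E; [|reflexivity].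
    apply grade_SomeE in E; destruct E as [[] _]; reflexivity.
Qed.

Lemma grade_of_lact_nz (s : S) (a : G) (y : Y) :
  lact Y (smash_of s a) y <> lpt Y -> grade y = Some a.
Proof.
  intro H.
  assert (Hy : y <> lpt Y) by (intros ->; apply H, lact_Y_pt).
  destruct (grade y) as [b|] eqn:E.
  - apply grade_SomeE in E as [_ [t Ht]].
    f_equal; apply (lact_nz_index_unique (s:=t) (t:=s) (y:=y)); congruence.
  - apply grade_NoneE in E; contradiction.
Qed.

Definition grade_act (s : S) (y : Y) : Y :=
  match grade y with
  | Some b => lact Y (smash_of s b) y
  | None => lpt Y
  end.

Lemma grade_act_pt (s : S) : grade_act s (lpt Y) = lpt Y.
Proof. unfold grade_act; rewrite (proj2 (grade_NoneE _) eq_refl); reflexivity. Qed.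

Lemma grade_act_assoc (s t : S) (y : Y) :
  grade_act s (grade_act t y) = grade_act (mmul s t) y.
Proof.
  unfold grade_act at 2 3; destruct (grade y) as [b|] eqn:Eb; [|apply grade_act_pt].
  destruct (excluded_middle_informative (lact Y (smash_of t b) y = lpt Y)) as [E|E].
  - rewrite E, grade_act_pt, <- smash_of_mul_deg, <- lact_assoc, E.
    symmetry; apply lact_Y_pt.
  - unfold grade_act; rewrite (proj2 (grade_SomeE _ _) (has_grade_lact E)).
    rewrite lact_assoc, smash_of_mul_deg; reflexivity.
Qed.

Lemma grade_act_zero (y : Y) : grade_act (mzero S) y = lpt Y.
Proof.
  unfold grade_act; destruct (grade y); [|reflexivity].
  rewrite smash_of_zero; apply (lact_zero (l:=Y)).
Qed.

Lemma grade_act_unital (y : Y) : exists s w, y = grade_act s w.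
Proof.
  destruct (grade y) as [b|] eqn:E.
  - pose proof E as [_ [t Ht]]%grade_SomeE.
    exists t, y; unfold grade_act; rewrite E, Ht; reflexivity.
  - exists (mzero S), y; rewrite grade_act_zero; apply grade_NoneE, E.
Qed.

Definition mod_to_gr_lset : LSet S :=
  {| lcar := Y; lact := grade_act; lpt := lpt Y; lact_assoc := grade_act_assoc;
     lact_zero := grade_act_zero; lunital := grade_act_unital |}.

Lemma grade_grade_act (s : S) (y : Y) (b : G) :
  grade_act s y <> lpt Y -> grade y = Some b ->
  grade (grade_act s y) = Some (gmul (deg s) b).
Proof.
  unfold grade_act; intros H E; rewrite E in *.
  apply grade_SomeE, has_grade_lact, H.
Qed.

Definition mod_to_gr : GrSet deg :=
  @Build_GrSet G S deg mod_to_gr_lset grade grade_NoneE grade_grade_act.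

End ModToGr.

Section GrToMod.
Variable X : GrSet deg.

Lemma lact_X_pt (s : S) : lact X s (lpt X) = lpt X.
Proof. exact (lact_pt X muls0 s). Qed.

Lemma gdeg_X_pt : gdeg (lpt X) = None.
Proof. apply (gdeg_pt (g:=X)); reflexivity. Qed.

Definition smash_act (u : Smash deg) (x : X) : X :=
  match u with
  | Some p =>
      if excluded_middle_informative (gdeg x = Some (snd (proj1_sig p)))
      then lact X (fst (proj1_sig p)) x else lpt X
  | None => lpt X
  end.

Lemma smash_act_smash_of (s : S) (a : G) (x : X) :
  smash_act (smash_of s a) x =
  if excluded_middle_informative (gdeg x = Some a) then lact X s x else lpt X.
Proof.
  unfold smash_of; destruct (excluded_middle_informative _) as [Hs|Hs]; [|reflexivity].
  destruct (excluded_middle_informative _); [|reflexivity].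
  rewrite Hs; symmetry; apply (lact_zero (l:=X)).
Qed.

Lemma smash_act_pt (u : Smash deg) : smash_act u (lpt X) = lpt X.
Proof.
  destruct (smash_of_surj u) as [s [a ->]].
  rewrite smash_act_smash_of, gdeg_X_pt, if_emi_false; [reflexivity|discriminate].
Qed.

Lemma smash_act_assoc (u v : Smash deg) (x : X) :
  smash_act u (smash_act v x) = smash_act (mmul u v) x.
Proof.
  destruct (smash_of_surj u) as [s [a ->]], (smash_of_surj v) as [t [b ->]].
  rewrite smash_of_mul, (smash_act_smash_of t b x).
  destruct (excluded_middle_informative (gdeg x = Some b)) as [Hx|Hx].
  - destruct (excluded_middle_informative (lact X t x = lpt X)) as [E|E].
    + rewrite E, smash_act_pt.
      destruct (excluded_middle_informative _); [|reflexivity].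
      rewrite smash_act_smash_of, if_emi_true, <- lact_assoc, E by exact Hx.
      symmetry; apply lact_X_pt.
    + rewrite smash_act_smash_of, (gdeg_act E Hx).
      destruct (excluded_middle_informative (gmul (deg t) b = a)) as [Ha|Ha].
      * rewrite if_emi_true, smash_act_smash_of, if_emi_true by congruence.
        apply lact_assoc.
      * rewrite if_emi_false by congruence; reflexivity.
  - rewrite smash_act_pt.
    destruct (excluded_middle_informative _); [|reflexivity].
    rewrite smash_act_smash_of, if_emi_false by exact Hx; reflexivity.
Qed.

Lemma smash_act_zero (x : X) : smash_act (mzero (Smash deg)) x = lpt X.
Proof. reflexivity. Qed.

Lemma smash_act_unital (x : X) : exists u w, x = smash_act u w.
Proof.
  destruct (excluded_middle_informative (x = lpt X)) as [E|E].
  - exists (mzero (Smash deg)), x; exact E.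
  - destruct (lact_left_unit left_units x) as [u Hu].
    destruct (gdeg x) as [b|] eqn:Eb; [|apply (gdeg_pt (g:=X)) in Eb; contradiction].
    exists (smash_of u b), x.
    rewrite smash_act_smash_of, if_emi_true by exact Eb; symmetry; exact Hu.
Qed.

Definition gr_to_mod : LSet (Smash deg) :=
  {| lcar := X; lact := smash_act; lpt := lpt X; lact_assoc := smash_act_assoc;
     lact_zero := smash_act_zero; lunital := smash_act_unital |}.

End GrToMod.

Lemma gdeg_graded_map (X1 X2 : GrSet deg) (f : X1 -> X2) (x : X1) :
  is_Tmap f -> is_graded_map f -> f x <> lpt X2 -> gdeg (f x) = gdeg x.
Proof.
  intros Hf Hg Hfx; destruct (gdeg x) as [c|] eqn:Ec.
  - destruct (Hg c x (or_intror Ec)) as [E|E]; [contradiction|exact E].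
  - apply (gdeg_pt (g:=X1)) in Ec; subst x; exfalso; apply Hfx, (Tmap_pt Hf).
Qed.

Lemma gr_to_mod_map (X1 X2 : GrSet deg) (f : X1 -> X2) :
  is_Tmap f /\ is_graded_map f -> @is_Tmap _ (gr_to_mod X1) (gr_to_mod X2) f.
Proof.
  intros [Hf Hg] u x; destruct (smash_of_surj u) as [s [a ->]]; simpl.
  rewrite !smash_act_smash_of.
  destruct (excluded_middle_informative (f x = lpt X2)) as [E|E].
  - rewrite E, lact_X_pt.
    transitivity (lpt X2); [|destruct (excluded_middle_informative _); reflexivity].
    destruct (excluded_middle_informative _);
      [rewrite Hf, E; apply lact_X_pt|apply (Tmap_pt Hf)].
  - rewrite (gdeg_graded_map Hf Hg E).
    destruct (excluded_middle_informative _); [apply Hf|apply (Tmap_pt Hf)].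
Qed.

Definition smash_functor : Functor (GrCat deg) (ModCat (Smash deg)).
Proof.
  refine {| fobj := (gr_to_mod : Ob (GrCat deg) -> Ob (ModCat (Smash deg)));
            fmap := fun X Y f => exist (fun g : gr_to_mod X -> gr_to_mod Y => is_Tmap g)
                                   (proj1_sig f) (gr_to_mod_map (proj2_sig f)) |};
  intros; apply sig_eq; reflexivity.
Defined.

Lemma grade_Tmap (Y1 Y2 : LSet (Smash deg)) (f : Y1 -> Y2) (y : Y1) :
  is_Tmap f -> f y <> lpt Y2 -> grade (f y) = grade y.
Proof.
  intros Hf Hfy; destruct (grade y) as [b|] eqn:E.
  - apply grade_SomeE in E as [_ [t Ht]].
    apply grade_SomeE; split; [exact Hfy|exists t; rewrite <- Hf, Ht; reflexivity].
  - apply grade_NoneE in E; subst y; exfalso; apply Hfy, (Tmap_pt Hf).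
Qed.

Lemma mod_to_gr_map (Y1 Y2 : LSet (Smash deg)) (f : Y1 -> Y2) :
  is_Tmap f ->
  @is_Tmap _ (mod_to_gr Y1) (mod_to_gr Y2) f /\
  @is_graded_map _ _ _ (mod_to_gr Y1) (mod_to_gr Y2) f.
Proof.
  intro Hf; split.
  - intros s y; simpl.
    destruct (excluded_middle_informative (f y = lpt Y2)) as [E|E].
    + rewrite E, grade_act_pt; unfold grade_act.
      destruct (grade y); [rewrite Hf, E; apply lact_Y_pt|apply (Tmap_pt Hf)].
    + unfold grade_act; rewrite (grade_Tmap Hf E).
      destruct (grade y); [apply Hf|apply (Tmap_pt Hf)].
  - intros a y [E|E]; simpl in E.
    + left; rewrite E; apply (Tmap_pt Hf).
    + destruct (excluded_middle_informative (f y = lpt Y2)) as [E'|E'];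
        [left; exact E'|right; simpl; rewrite (grade_Tmap Hf E'); exact E].
Qed.

Definition smash_functor_inv : Functor (ModCat (Smash deg)) (GrCat deg).
Proof.
  refine {| fobj := (mod_to_gr : Ob (ModCat (Smash deg)) -> Ob (GrCat deg));
            fmap := fun X Y f =>
              exist (fun g : mod_to_gr X -> mod_to_gr Y => is_Tmap g /\ is_graded_map g)
                    (proj1_sig f) (mod_to_gr_map (proj2_sig f)) |};
  intros; apply sig_eq; reflexivity.
Defined.

Lemma grade_gr_to_mod (X : GrSet deg) (x : X) : grade (Y:=gr_to_mod X) x = gdeg x.
Proof.
  destruct (gdeg x) as [b|] eqn:Eb.
  - apply grade_SomeE; split.
    + intros ->; rewrite gdeg_X_pt in Eb; discriminate.
    + destruct (lact_left_unit left_units x) as [u Hu]; exists u; simpl.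
      rewrite smash_act_smash_of, if_emi_true by exact Eb; exact Hu.
  - apply grade_NoneE, (gdeg_pt (g:=X)), Eb.
Qed.

Lemma grade_act_gr_to_mod (X : GrSet deg) (s : S) (x : X) :
  grade_act (Y:=gr_to_mod X) s x = lact X s x.
Proof.
  unfold grade_act; rewrite grade_gr_to_mod.
  destruct (gdeg x) as [b|] eqn:Eb.
  - simpl; rewrite smash_act_smash_of, if_emi_true by exact Eb; reflexivity.
  - apply (gdeg_pt (g:=X)) in Eb; subst x; symmetry; apply lact_X_pt.
Qed.

Lemma mod_to_gr_gr_to_mod (X : GrSet deg) : mod_to_gr (gr_to_mod X) = X.
Proof.
  pose proof (grade_gr_to_mod (X:=X)) as Hd.
  pose proof (grade_act_gr_to_mod (X:=X)) as Ha.
  revert Hd Ha; destruct X as [[A act pt ? ? ?] d ? ?]; intros Hd Ha.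
  apply Build_GrSet_eq.
  - do 2 (apply functional_extensionality; intro); apply Ha.
  - apply functional_extensionality; exact Hd.
Qed.

Lemma smash_act_mod_to_gr (Y : LSet (Smash deg)) (u : Smash deg) (y : Y) :
  smash_act (X:=mod_to_gr Y) u y = lact Y u y.
Proof.
  destruct (smash_of_surj u) as [s [a ->]]; rewrite smash_act_smash_of; simpl.
  destruct (excluded_middle_informative (grade y = Some a)) as [E|E].
  - unfold grade_act; rewrite E; reflexivity.
  - destruct (excluded_middle_informative (lact Y (smash_of s a) y = lpt Y)) as [N|N].
    + symmetry; exact N.
    + exfalso; apply E, (grade_of_lact_nz N).
Qed.

Lemma gr_to_mod_mod_to_gr (Y : LSet (Smash deg)) : gr_to_mod (mod_to_gr Y) = Y.
Proof.
  pose proof (smash_act_mod_to_gr (Y:=Y)) as Ha.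
  revert Ha; destruct Y as [A act pt ? ? ?]; intro Ha.
  apply Build_LSet_eq; do 2 (apply functional_extensionality; intro); apply Ha.
Qed.

Lemma smash_act_shift (a : G) (X : GrSet deg) (u : Smash deg) (x : X) :
  smash_act (X:=X) (shift_el a u) x = smash_act (X:=shift_gr a X) u x.
Proof.
  destruct (smash_of_surj u) as [s [b ->]].
  rewrite shift_el_smash_of, !smash_act_smash_of; simpl.
  destruct (excluded_middle_informative (gdeg x = Some (gmul b a))) as [E|E].
  - rewrite E, if_emi_true; [reflexivity|simpl].
    rewrite <- gmulA, gmulgV, gmulg1; reflexivity.
  - rewrite if_emi_false; [reflexivity|].
    destruct (gdeg x) as [c|]; simpl; [|discriminate].
    intros [= <-]; apply E; rewrite <- gmulA, gmulVg, gmulg1; reflexivity.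
Qed.

Lemma shift_mod_gr_to_mod (a : G) (X : GrSet deg) :
  shift_mod a (gr_to_mod X) = gr_to_mod (shift_gr a X).
Proof.
  pose proof (smash_act_shift a (X:=X)) as Ha.
  revert Ha; destruct X as [[A act pt ? ? ?] d ? ?]; intro Ha.
  apply Build_LSet_eq; do 2 (apply functional_extensionality; intro); apply Ha.
Qed.

Lemma smash_functor_inv_comp : Fcomp smash_functor_inv smash_functor = Fid (GrCat deg).
Proof.
  apply (@functor_eq_concrete (GrCat deg) (GrCat deg) (fun X => lcar (gset X))
           (fun X Y f => proj1_sig f) (fun X Y f g H => sig_eq H)
           (Fcomp smash_functor_inv smash_functor) (Fid _)
           mod_to_gr_gr_to_mod (fun X => eq_refl)).
  reflexivity.
Qed.

Lemma smash_functor_comp_inv :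
  Fcomp smash_functor smash_functor_inv = Fid (ModCat (Smash deg)).
Proof.
  apply (@functor_eq_concrete (ModCat (Smash deg)) (ModCat (Smash deg)) (fun Y => lcar Y)
           (fun X Y f => proj1_sig f) (fun X Y f g H => sig_eq H)
           (Fcomp smash_functor smash_functor_inv) (Fid _)
           gr_to_mod_mod_to_gr (fun X => eq_refl)).
  reflexivity.
Qed.

Lemma smash_functor_shift (a : G) :
  Fcomp (ShiftMod deg a) smash_functor = Fcomp smash_functor (ShiftGr deg a).
Proof.
  apply (@functor_eq_concrete (GrCat deg) (ModCat (Smash deg)) (fun Y => lcar Y)
           (fun X Y f => proj1_sig f) (fun X Y f g H => sig_eq H)
           (Fcomp (ShiftMod deg a) smash_functor) (Fcomp smash_functor (ShiftGr deg a))
           (shift_mod_gr_to_mod a) (fun X => eq_refl)).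
  reflexivity.
Qed.

End SmashCorrespondence.

Theorem theorem3p5 (G : Group) (S : Magma0) (deg : S -> G)
  (HS : is_semigroup0 S) (Hdeg : is_graded deg) (Hlu : has_local_units S) :
  exists F : Functor (GrCat deg) (ModCat (Smash deg)),
    is_iso_of_cats F /\
    forall a : G, Fcomp (ShiftMod deg a) F = Fcomp F (ShiftGr deg a).
Proof.
  destruct HS as [_ [mul0s muls0]].
  assert (left_units : forall s : S, exists u, mmul u s = s).
  { intro s; destruct (Hlu s) as [u [_ [_ [_ [Hu _]]]]]; exists u; exact Hu. }
  exists (smash_functor deg mul0s muls0 left_units); split.
  - exists (smash_functor_inv deg mul0s muls0 left_units); split.
    + apply smash_functor_inv_comp.
    + apply smash_functor_comp_inv.
  - apply smash_functor_shift.
Qed.
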